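(* Let $u=u(x,y,z,t)$ be a smooth function with $u_x\neq 0$ satisfying \[ D_z\!\left(\frac{u_y}{u_x}\right)-D_x\!\left(\frac{u_t}{u_x}\right)=0. \qquad (\ast) \] Call a smooth function $U$ a symmetry of $(\ast)$ (at $u$) if it satisfies the linearized equation \[ \ell(U):=D_z\!\left(\frac{u_xU_y-u_yU_x}{u_x^2}\right)-D_x\!\left(\frac{u_xU_t-u_tU_x}{u_x^2}\right)=0 . \] Consider the relations, for an unknown function $\tilde U$, \[ \tilde{U}_z-\frac{u_{xz}}{u_x}\,\tilde{U}=U_t-\frac{u_t}{u_x}\,U_x,\qquad \tilde{U}_x-\frac{u_{xx}}{u_x}\,\tilde{U}=U_y-\frac{u_y}{u_x}\,U_x. \qquad (\ast\ast) \] Then these relations define a recursion operator for $(\ast)$, namely: (a) if $u$ satisfies $(\ast)$ and $U$ satisfies $\ell(U)=0$, then the system $(\ast\ast)$, regarded as an overdetermined first-order system for $\tilde U$, is compatible (its cross-differentiation compatibility condition holds identically by virtue of $(\ast)$, $\ell(U)=0$ and their differential consequences); and (b) if $u$ satisfies $(\ast)$, $U$ satisfies $\ell(U)=0$, and $\tilde U$ satisfies $(\ast\ast)$, then $\ell(\tilde U)=0$, i.e. $\tilde U$ is again a symmetry of $(\ast)$.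
   Context: Subscripts denote partial derivatives and $D_x,D_y,D_z,D_t$ denote total derivatives. The linearized equation $\ell(U)=0$ is obtained by replacing $u$ by $u+\varepsilon U$ in the left-hand side of $(\ast)$ and taking the coefficient of $\varepsilon$ (the linearization). Symmetries here may be nonlocal, i.e. $U,\tilde U$ are arbitrary smooth functions satisfying the stated equations. The equation $(\ast)$ admits the Lax pair $\psi_t=\lambda\psi_z+(u_t/u_x)\psi_x$, $\psi_y=(\lambda+u_y/u_x)\psi_x$ with spectral parameter $\lambda$. *)

From Stdlib Require Import Reals List ClassicalEpsilon.
Open Scope R_scope.

Definition F4 := R -> R -> R -> R -> R.

Inductive dir := dX | dY | dZ | dT.

Definition slice (d : dir) (g : F4) (x y z t : R) : R -> R :=
  match d with
  | dX => fun s => g s y z t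
  | dY => fun s => g x s z t
  | dZ => fun s => g x y s t
  | dT => fun s => g x y z s
  end.

Definition coord (d : dir) (x y z t : R) : R :=
  match d with dX => x | dY => y | dZ => z | dT => t end.

(** Derivative of a one-variable function at a point: the (unique) l with
    derivable_pt_lim g a l; an unspecified value if g is not derivable at a
    (only used where derivability is guaranteed by smoothness). *)
Definition der (g : R -> R) (a : R) : R :=
  epsilon (inhabits 0) (fun l => derivable_pt_lim g a l).

(** Since u, U are
    functions of (x,y,z,t), the total derivatives D_x,... of expressions in
    u, U and their derivatives are exactly partial derivatives of the composite
    functions. *)
Definition pd (d : dir) (g : F4) : F4 :=
  fun x y z t => der (slice d g x y z t) (coord d x y z t).

Definition iter_pd (ds : list dir) (g : F4) : F4 := fold_right pd g ds.

Definition cont4_at (g : F4) (x y z t : R) : Prop :=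
  forall eps, 0 < eps -> exists delta, 0 < delta /\
    forall x' y' z' t', Rabs (x' - x) < delta -> Rabs (y' - y) < delta ->
      Rabs (z' - z) < delta -> Rabs (t' - t) < delta ->
      Rabs (g x' y' z' t' - g x y z t) < eps.

Definition open4 (O : R -> R -> R -> R -> Prop) : Prop :=
  forall x y z t, O x y z t -> exists delta, 0 < delta /\
    forall x' y' z' t', Rabs (x' - x) < delta -> Rabs (y' - y) < delta ->
      Rabs (z' - z) < delta -> Rabs (t' - t) < delta -> O x' y' z' t'.

Definition smooth_on (O : R -> R -> R -> R -> Prop) (g : F4) : Prop :=
  forall (ds : list dir) x y z t, O x y z t ->
    (forall d, exists l,
       derivable_pt_lim (slice d (iter_pd ds g) x y z t) (coord d x y z t) l)
    /\ cont4_at (iter_pd ds g) x y z t.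

Definition eq_lhs (u : F4) : F4 :=
  fun x y z t =>
    pd dZ (fun x y z t => pd dY u x y z t / pd dX u x y z t) x y z t
  - pd dX (fun x y z t => pd dT u x y z t / pd dX u x y z t) x y z t.

Definition ell (u U : F4) : F4 :=
  fun x y z t =>
    pd dZ (fun x y z t =>
       (pd dX u x y z t * pd dY U x y z t - pd dY u x y z t * pd dX U x y z t)
       / (pd dX u x y z t ^ 2)) x y z t
  - pd dX (fun x y z t =>
       (pd dX u x y z t * pd dT U x y z t - pd dT u x y z t * pd dX U x y z t)
       / (pd dX u x y z t ^ 2)) x y z t.

Definition recA (u : F4) : F4 :=
  fun x y z t => pd dZ (pd dX u) x y z t / pd dX u x y z t.
Definition recC (u : F4) : F4 :=
  fun x y z t => pd dX (pd dX u) x y z t / pd dX u x y z t.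
Definition recB (u U : F4) : F4 :=
  fun x y z t => pd dT U x y z t - pd dT u x y z t / pd dX u x y z t * pd dX U x y z t.
Definition recE (u U : F4) : F4 :=
  fun x y z t => pd dY U x y z t - pd dY u x y z t / pd dX u x y z t * pd dX U x y z t.

(** Cross-differentiation compatibility condition of ( ** ) at a point, where
    w stands for the (arbitrary) value of Ut: computing (Ut_z)_x and (Ut_x)_z
    using ( ** ) to eliminate Ut_x and Ut_z, the two must agree identically in w. *)
Definition compat_at (u U : F4) (x y z t w : R) : Prop :=
  pd dX (recA u) x y z t * w
    + recA u x y z t * (recC u x y z t * w + recE u U x y z t)
    + pd dX (recB u U) x y z t
  = pd dZ (recC u) x y z t * w
    + recC u x y z t * (recA u x y z t * w + recB u U x y z t)
    + pd dZ (recE u U) x y z t.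

Definition rec_rel (u U Ut : F4) (x y z t : R) : Prop :=
  pd dZ Ut x y z t - recA u x y z t * Ut x y z t = recB u U x y z t /\
  pd dX Ut x y z t - recC u x y z t * Ut x y z t = recE u U x y z t.

(* Both parts are direct computations once mixed partial derivatives commute.
   (a) Cross-differentiating ( ** ), the coefficients of [Ut] agree because
   u_xxz = u_xzx, and the remaining terms differ by u_x * ell(U).
   (b) Expanding ell(Ut) and substituting Ut_z, Ut_x and their derivatives from
   ( ** ), the terms in Ut_y and Ut_t cancel, and what is left is a combination
   of ell(U), of ( * ) and of the x-derivative of ( * ).
   Equality of mixed partials comes from Coquelicot's Schwarz theorem, stated
   for [Derive]; on a box where the inner derivatives exist it agrees with [der]. *)

From Stdlib Require Import Reals Lra List ClassicalEpsilon.
From Coquelicot Require Import Coquelicot.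
Open Scope R_scope.

Lemma der_correct g a l : derivable_pt_lim g a l -> der g a = l.
Proof.
  intros H. unfold der.
  pose proof (epsilon_spec (inhabits 0) (fun l => derivable_pt_lim g a l)
    (ex_intro _ l H)) as Hl.
  exact (uniqueness_limite _ _ _ _ Hl H).
Qed.

Lemma Derive_der g a : (exists l, derivable_pt_lim g a l) -> Derive g a = der g a.
Proof.
  intros [l H]. rewrite (der_correct _ _ _ H).
  apply is_derive_unique, is_derive_Reals, H.
Qed.

Lemma Rabs_sub_diag_lt a d : 0 < d -> Rabs (a - a) < d.
Proof. intros hd. rewrite Rminus_diag, Rabs_R0. exact hd. Qed.

Lemma Rabs_sub_lt_shrink a b s d :
  Rabs (b - a) < d -> Rabs (s - b) < d - Rabs (b - a) -> Rabs (s - a) < d.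
Proof.
  intros hb hs. replace (s - a) with ((s - b) + (b - a)) by ring.
  eapply Rle_lt_trans; [apply Rabs_triang | lra].
Qed.

Lemma derivable_pt_lim_locally f g a l d : 0 < d ->
  (forall s, Rabs (s - a) < d -> f s = g s) ->
  derivable_pt_lim g a l -> derivable_pt_lim f a l.
Proof.
  intros hd Hfg H eps heps.
  destruct (H eps heps) as [del Hdel].
  assert (hm : 0 < Rmin del d) by (apply Rmin_pos; [apply cond_pos | lra]).
  exists (mkposreal _ hm). intros h hh hlt. simpl in hlt.
  rewrite (Hfg (a + h)), (Hfg a).
  - apply Hdel; auto. eapply Rlt_le_trans; [exact hlt | apply Rmin_l].
  - now apply Rabs_sub_diag_lt.
  - replace (a + h - a) with h by ring.
    eapply Rlt_le_trans; [exact hlt | apply Rmin_r].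
Qed.

Lemma continuity_2d_pt_locally (F G : R -> R -> R) a b (d : posreal) :
  (forall u v, Rabs (u - a) < d -> Rabs (v - b) < d -> F u v = G u v) ->
  continuity_2d_pt F a b -> continuity_2d_pt G a b.
Proof.
  intros HFG HF eps. destruct (HF eps) as [e He].
  assert (hm : 0 < Rmin e d) by (apply Rmin_pos; apply cond_pos).
  exists (mkposreal _ hm). intros u v hu hv. simpl in hu, hv.
  rewrite <- !HFG; try apply Rabs_sub_diag_lt, cond_pos;
    try (eapply Rlt_le_trans; [eassumption | apply Rmin_r]).
  apply He; eapply Rlt_le_trans; eauto; apply Rmin_l.
Qed.

Lemma is_derive_Derive_der2 (f : R -> R -> R) a b (d : posreal) :
  (forall u v, Rabs (u - a) < d -> Rabs (v - b) < d ->
     (exists l, derivable_pt_lim (fun r => f u r) v l) /\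
     (exists l, derivable_pt_lim (fun s => der (fun r => f s r) v) u l)) ->
  forall u v, Rabs (u - a) < d -> Rabs (v - b) < d ->
    is_derive (fun s => Derive (fun r => f s r) v) u
      (der (fun s => der (fun r => f s r) v) u).
Proof.
  intros H u v hu hv. destruct (H u v hu hv) as [_ [l Hl]].
  apply is_derive_Reals. rewrite (der_correct _ _ _ Hl).
  apply (derivable_pt_lim_locally _ (fun s => der (fun r => f s r) v) _ _
    (d - Rabs (u - a))); [lra | | exact Hl].
  intros s hs. apply Derive_der, (H s v); [|exact hv].
  exact (Rabs_sub_lt_shrink _ _ _ _ hu hs).
Qed.

Lemma der_mixed_comm (f : R -> R -> R) a b (d : posreal) :
  (forall u v, Rabs (u - a) < d -> Rabs (v - b) < d ->
     (exists l, derivable_pt_lim (fun s => f s v) u l) /\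
     (exists l, derivable_pt_lim (fun r => f u r) v l) /\
     (exists l, derivable_pt_lim (fun s => der (fun r => f s r) v) u l) /\
     (exists l, derivable_pt_lim (fun r => der (fun s => f s r) u) v l)) ->
  continuity_2d_pt (fun u v => der (fun s => der (fun r => f s r) v) u) a b ->
  continuity_2d_pt (fun u v => der (fun r => der (fun s => f s r) u) v) a b ->
  der (fun s => der (fun r => f s r) b) a = der (fun r => der (fun s => f s r) a) b.
Proof.
  intros H C1 C2.
  assert (D1 := is_derive_Derive_der2 f a b d
    ltac:(intros u v hu hv; now destruct (H u v hu hv) as [_ [? [? _]]])).
  assert (D2 := is_derive_Derive_der2 (fun r s => f s r) b a d
    ltac:(intros v u hv hu; now destruct (H u v hu hv) as [? [_ [_ ?]]])).
  simpl in D2.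
  assert (ha := Rabs_sub_diag_lt a d (cond_pos d)).
  assert (hb := Rabs_sub_diag_lt b d (cond_pos d)).
  rewrite <- (is_derive_unique _ _ _ (D1 a b ha hb)),
          <- (is_derive_unique _ _ _ (D2 b a hb ha)).
  apply Schwarz.
  - exists d. intros u v hu hv.
    destruct (H u v hu hv) as [[l1 H1] [[l2 H2] _]].
    repeat split.
    + exists l1. now apply is_derive_Reals.
    + exists l2. now apply is_derive_Reals.
    + eexists. exact (D1 u v hu hv).
    + eexists. exact (D2 v u hv hu).
  - refine (continuity_2d_pt_locally _ _ _ _ d _ C1).
    intros u v hu hv. symmetry. exact (is_derive_unique _ _ _ (D1 u v hu hv)).
  - refine (continuity_2d_pt_locally _ _ _ _ d _ C2).
    intros u v hu hv. symmetry. exact (is_derive_unique _ _ _ (D2 v u hv hu)).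
Qed.

Definition has_pd (d : dir) (g : F4) x y z t l : Prop :=
  derivable_pt_lim (slice d g x y z t) (coord d x y z t) l.

Lemma pd_correct d g x y z t l : has_pd d g x y z t l -> pd d g x y z t = l.
Proof. apply der_correct. Qed.

Lemma has_pd_plus d f g x y z t lf lg :
  has_pd d f x y z t lf -> has_pd d g x y z t lg ->
  has_pd d (fun x y z t => f x y z t + g x y z t) x y z t (lf + lg).
Proof. destruct d; apply derivable_pt_lim_plus. Qed.

Lemma has_pd_minus d f g x y z t lf lg :
  has_pd d f x y z t lf -> has_pd d g x y z t lg ->
  has_pd d (fun x y z t => f x y z t - g x y z t) x y z t (lf - lg).
Proof. destruct d; apply derivable_pt_lim_minus. Qed.

Lemma has_pd_mult d f g x y z t lf lg :
  has_pd d f x y z t lf -> has_pd d g x y z t lg ->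
  has_pd d (fun x y z t => f x y z t * g x y z t) x y z t
    (lf * g x y z t + f x y z t * lg).
Proof. destruct d; apply derivable_pt_lim_mult. Qed.

Lemma has_pd_div d f g x y z t lf lg :
  has_pd d f x y z t lf -> has_pd d g x y z t lg -> g x y z t <> 0 ->
  has_pd d (fun x y z t => f x y z t / g x y z t) x y z t
    ((lf * g x y z t - lg * f x y z t) / (g x y z t * g x y z t)).
Proof. intros Hf Hg Hg0; destruct d; exact (derivable_pt_lim_div _ _ _ _ _ Hf Hg Hg0). Qed.

Lemma has_pd_sqr d f x y z t lf : has_pd d f x y z t lf ->
  has_pd d (fun x y z t => f x y z t ^ 2) x y z t (lf * f x y z t + f x y z t * lf).
Proof.
  intros H. assert (H2 := has_pd_mult d f f x y z t lf lf H H). revert H2.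
  destruct d; apply derivable_pt_lim_locally with 1; try lra; intros; simpl; ring.
Qed.

Lemma has_pd_const d c x y z t : has_pd d (fun _ _ _ _ => c) x y z t 0.
Proof. destruct d; apply derivable_pt_lim_const. Qed.

Lemma smooth_on_pd O g d : smooth_on O g -> smooth_on O (pd d g).
Proof.
  intros H ds x y z t HO. specialize (H (ds ++ d :: nil) x y z t HO).
  unfold iter_pd in *. rewrite fold_right_app in H. exact H.
Qed.

Lemma has_pd_smooth O g d x y z t : smooth_on O g -> O x y z t ->
  has_pd d (fun x y z t => g x y z t) x y z t (pd d g x y z t).
Proof.
  intros Hs HO. destruct (proj1 (Hs nil x y z t HO) d) as [l Hl].
  unfold has_pd. rewrite (pd_correct d g x y z t l Hl). exact Hl.
Qed.

Lemma pd_locally O f g d x y z t l : open4 O -> O x y z t ->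
  (forall x y z t, O x y z t -> f x y z t = g x y z t) ->
  has_pd d g x y z t l -> pd d f x y z t = l.
Proof.
  intros Ho HO Hfg H. apply der_correct.
  destruct (Ho x y z t HO) as [del [hdel Hdel]].
  apply (derivable_pt_lim_locally _ (slice d g x y z t) _ _ del hdel); [|exact H].
  intros s hs. destruct d; apply Hfg, Hdel; auto; now apply Rabs_sub_diag_lt.
Qed.

Lemma pd_ext_on O f g d x y z t : open4 O -> O x y z t -> smooth_on O g ->
  (forall x y z t, O x y z t -> f x y z t = g x y z t) ->
  pd d f x y z t = pd d g x y z t.
Proof.
  intros Ho HO Hs Hfg. apply (pd_locally O _ g); auto. now apply (has_pd_smooth O).
Qed.

Lemma pd_comm O g d1 d2 x y z t : open4 O -> smooth_on O g -> O x y z t ->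
  pd d1 (pd d2 g) x y z t = pd d2 (pd d1 g) x y z t.
Proof.
  intros Ho Hs HO.
  destruct (Ho x y z t HO) as [del [hdel Hdel]].
  destruct d1, d2; try reflexivity;
  match goal with |- pd ?d1 (pd ?d2 _) _ _ _ _ = _ =>
    cbv [pd slice coord];
    apply (der_mixed_comm _ _ _ (mkposreal _ hdel));
    [ intros u v hu hv;
      refine (conj (proj1 (Hs nil _ _ _ _ _) d1)
             (conj (proj1 (Hs nil _ _ _ _ _) d2)
             (conj (proj1 (Hs (d2 :: nil) _ _ _ _ _) d1)
                   (proj1 (Hs (d1 :: nil) _ _ _ _ _) d2))));
      apply Hdel
    | intros eps;
      destruct (proj2 (Hs (d1 :: d2 :: nil) _ _ _ _ HO) eps (cond_pos eps)) as [e [he He]];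
      exists (mkposreal e he); intros u v hu hv; apply He
    | intros eps;
      destruct (proj2 (Hs (d2 :: d1 :: nil) _ _ _ _ HO) eps (cond_pos eps)) as [e [he He]];
      exists (mkposreal e he); intros u v hu hv; apply He ]
  end;
  first [assumption | now apply Rabs_sub_diag_lt].
Qed.

Ltac solve_has_pd O Hux HO :=
  first
  [ eapply has_pd_minus; [solve_has_pd O Hux HO | solve_has_pd O Hux HO]
  | eapply has_pd_plus; [solve_has_pd O Hux HO | solve_has_pd O Hux HO]
  | eapply has_pd_mult; [solve_has_pd O Hux HO | solve_has_pd O Hux HO]
  | eapply has_pd_div; [solve_has_pd O Hux HO | solve_has_pd O Hux HO |
      cbv beta; first [ apply Rmult_integral_contrapositive_currified; apply Hux, HO
                      | apply pow_nonzero, Hux, HO | apply Hux, HO ] ]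
  | eapply has_pd_sqr; solve_has_pd O Hux HO
  | eapply (has_pd_smooth O); [repeat apply smooth_on_pd; assumption | exact HO] ].

Section Recursion.

Variable O : R -> R -> R -> R -> Prop.
Variable u : F4.
Hypothesis Ho : open4 O.
Hypothesis Hu : smooth_on O u.
Hypothesis Hux : forall x y z t, O x y z t -> pd dX u x y z t <> 0.

Lemma ell_expand V x y z t : smooth_on O V -> O x y z t ->
  ell u V x y z t =
    (pd dZ (pd dY V) x y z t * pd dX u x y z t
     + pd dY V x y z t * pd dZ (pd dX u) x y z t
     - pd dZ (pd dX V) x y z t * pd dY u x y z t
     - pd dX V x y z t * pd dZ (pd dY u) x y z t
     - pd dX (pd dT V) x y z t * pd dX u x y z t
     - pd dT V x y z t * pd dX (pd dX u) x y z t
     + pd dX (pd dX V) x y z t * pd dT u x y z t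
     + pd dX V x y z t * pd dX (pd dT u) x y z t) / pd dX u x y z t ^ 2
  - 2 * (pd dZ (pd dX u) x y z t
           * (pd dX u x y z t * pd dY V x y z t - pd dY u x y z t * pd dX V x y z t)
         - pd dX (pd dX u) x y z t
           * (pd dX u x y z t * pd dT V x y z t - pd dT u x y z t * pd dX V x y z t))
    / pd dX u x y z t ^ 3.
Proof.
  intros HV HO. pose proof (Hux x y z t HO).
  unfold ell.
  match goal with |- pd dZ ?F _ _ _ _ - pd dX ?G _ _ _ _ = _ =>
    erewrite (pd_correct dZ F) by solve_has_pd O Hux HO;
    erewrite (pd_correct dX G) by solve_has_pd O Hux HO end.
  cbv beta. field. auto.
Qed.

Lemma eq_lhs_expand x y z t : O x y z t ->
  eq_lhs u x y z t =
    (pd dZ (pd dY u) x y z t * pd dX u x y z t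
     - pd dZ (pd dX u) x y z t * pd dY u x y z t
     - pd dX (pd dT u) x y z t * pd dX u x y z t
     + pd dX (pd dX u) x y z t * pd dT u x y z t) / pd dX u x y z t ^ 2.
Proof.
  intros HO. pose proof (Hux x y z t HO).
  unfold eq_lhs.
  match goal with |- pd dZ ?F _ _ _ _ - pd dX ?G _ _ _ _ = _ =>
    erewrite (pd_correct dZ F) by solve_has_pd O Hux HO;
    erewrite (pd_correct dX G) by solve_has_pd O Hux HO end.
  cbv beta. field. auto.
Qed.

Lemma pd_comm_inner g d d1 d2 x y z t : smooth_on O g -> O x y z t ->
  pd d (pd d1 (pd d2 g)) x y z t = pd d (pd d2 (pd d1 g)) x y z t.
Proof.
  intros Hg HO. apply (pd_ext_on O); auto.
  - now do 2 apply smooth_on_pd.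
  - intros; now apply (pd_comm O).
Qed.

(* Rewriting [X] into [X - u_x * L], where [L = 0] contains [X] with
   coefficient [1 / u_x], eliminates [X] before [field]. *)
Lemma sub_mult_zero (X L k : R) : L = 0 -> X = X - k * L.
Proof. intros ->; ring. Qed.

Lemma rec_compat U x y z t w : smooth_on O U -> O x y z t -> ell u U x y z t = 0 ->
  compat_at u U x y z t w.
Proof.
  intros HU HO HellU. pose proof (Hux x y z t HO).
  rewrite (ell_expand U x y z t HU HO) in HellU.
  unfold compat_at, recA, recB, recC, recE.
  match goal with |- pd dX ?F1 _ _ _ _ * _ + _ + pd dX ?F2 _ _ _ _
                   = pd dZ ?F3 _ _ _ _ * _ + _ + pd dZ ?F4 _ _ _ _ =>
    erewrite (pd_correct dX F1) by solve_has_pd O Hux HO;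
    erewrite (pd_correct dX F2) by solve_has_pd O Hux HO;
    erewrite (pd_correct dZ F3) by solve_has_pd O Hux HO;
    erewrite (pd_correct dZ F4) by solve_has_pd O Hux HO end.
  cbv beta.
  rewrite (pd_comm O (pd dX u) dX dZ x y z t Ho (smooth_on_pd _ _ _ Hu) HO).
  rewrite (sub_mult_zero (pd dZ (pd dY U) x y z t) _ (pd dX u x y z t) HellU).
  field. auto.
Qed.

Lemma rec_symmetry U Ut x y z t :
  smooth_on O U -> smooth_on O Ut -> O x y z t ->
  (forall x y z t, O x y z t -> eq_lhs u x y z t = 0) ->
  ell u U x y z t = 0 ->
  (forall x y z t, O x y z t -> rec_rel u U Ut x y z t) ->
  ell u Ut x y z t = 0.
Proof.
  intros HU HUt HO Heq HellU Hrec. pose proof (Hux x y z t HO).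
  assert (HZ : forall x y z t, O x y z t ->
     pd dZ Ut x y z t = recA u x y z t * Ut x y z t + recB u U x y z t)
    by (intros ? ? ? ? HQ; destruct (Hrec _ _ _ _ HQ); lra).
  assert (HX : forall x y z t, O x y z t ->
     pd dX Ut x y z t = recC u x y z t * Ut x y z t + recE u U x y z t)
    by (intros ? ? ? ? HQ; destruct (Hrec _ _ _ _ HQ); lra).
  assert (Heq_x : pd dX (eq_lhs u) x y z t = 0)
    by (apply (pd_locally O _ (fun _ _ _ _ => 0)); auto; apply has_pd_const).
  erewrite (pd_locally O (eq_lhs u) _ dX x y z t _ Ho HO eq_lhs_expand) in Heq_x
    by solve_has_pd O Hux HO.
  assert (Heq0 := Heq x y z t HO). rewrite (eq_lhs_expand x y z t HO) in Heq0.
  rewrite (ell_expand U x y z t HU HO) in HellU.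
  rewrite (ell_expand Ut x y z t HUt HO).
  rewrite (pd_comm O Ut dZ dY x y z t Ho HUt HO),
          (pd_comm O Ut dX dT x y z t Ho HUt HO).
  erewrite (pd_locally O (pd dZ Ut) _ dY x y z t _ Ho HO HZ)
    by (unfold recA, recB; solve_has_pd O Hux HO).
  erewrite (pd_locally O (pd dX Ut) _ dT x y z t _ Ho HO HX)
    by (unfold recC, recE; solve_has_pd O Hux HO).
  erewrite (pd_locally O (pd dX Ut) _ dZ x y z t _ Ho HO HX)
    by (unfold recC, recE; solve_has_pd O Hux HO).
  erewrite (pd_locally O (pd dX Ut) _ dX x y z t _ Ho HO HX)
    by (unfold recC, recE; solve_has_pd O Hux HO).
  cbv beta in *.
  rewrite (HX x y z t HO), (HZ x y z t HO).
  unfold recA, recB, recC, recE.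
  assert (Hu_x := smooth_on_pd O u dX Hu).
  rewrite (pd_comm O (pd dY u) dX dZ x y z t Ho (smooth_on_pd _ _ _ Hu) HO),
          (pd_comm_inner u dZ dX dY x y z t Hu HO),
          (pd_comm O (pd dX u) dZ dY x y z t Ho Hu_x HO),
          (pd_comm O (pd dX u) dX dZ x y z t Ho Hu_x HO),
          (pd_comm_inner u dX dX dT x y z t Hu HO),
          (pd_comm O (pd dX u) dX dT x y z t Ho Hu_x HO) in Heq_x.
  rewrite (pd_comm O u dX dT x y z t Ho Hu HO),
          (pd_comm O u dX dY x y z t Ho Hu HO),
          (pd_comm O u dT dY x y z t Ho Hu HO),
          (pd_comm O U dX dY x y z t Ho HU HO),
          (pd_comm O U dT dY x y z t Ho HU HO),
          (pd_comm O U dT dX x y z t Ho HU HO) in *.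
  rewrite (sub_mult_zero (pd dY (pd dZ (pd dX u)) x y z t) _ (pd dX u x y z t) Heq_x),
          (sub_mult_zero (pd dZ (pd dY U) x y z t) _ (pd dX u x y z t) HellU),
          (sub_mult_zero (pd dZ (pd dY u) x y z t) _ (pd dX u x y z t) Heq0).
  field. auto.
Qed.

End Recursion.

Theorem mainTheorem1 (O : R -> R -> R -> R -> Prop) (u U : F4) :
  open4 O ->
  smooth_on O u ->
  smooth_on O U ->
  (forall x y z t, O x y z t -> pd dX u x y z t <> 0) ->
  (forall x y z t, O x y z t -> eq_lhs u x y z t = 0) ->
  (forall x y z t, O x y z t -> ell u U x y z t = 0) ->
  (forall x y z t w, O x y z t -> compat_at u U x y z t w) /\
  (forall Ut : F4, smooth_on O Ut ->
     (forall x y z t, O x y z t -> rec_rel u U Ut x y z t) ->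
     forall x y z t, O x y z t -> ell u Ut x y z t = 0).
Proof.
  intros Ho Hu HU Hux Heq HellU. split.
  - intros x y z t w HO.
    exact (rec_compat O u Ho Hu Hux U x y z t w HU HO (HellU x y z t HO)).
  - intros Ut HUt Hrec x y z t HO.
    exact (rec_symmetry O u Ho Hu Hux U Ut x y z t HU HUt HO Heq (HellU x y z t HO) Hrec).
Qed.
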